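(* Let $n\ge 3$, let $\varepsilon$ be an $n\times n$ signature matrix and let $(a_{\mathbf{i}})_{\mathbf{i}\in\mathbb{Z}^n}$ be an $\varepsilon$-$\mathrm{SL}_2$-tiling of $\mathbb{Z}^n$. Then every entry $a_{\mathbf{i}}$ is an odd-indexed Fibonacci number $F_{2m-1}$ ($m\ge1$), and for all $\mathbf{i}\in\mathbb{Z}^n$ and all $k\in\{1,\dots,n\}$ one has $a_{\mathbf{i}+\mathbf{e}_k}^2-a_{\mathbf{i}}a_{\mathbf{i}+2\mathbf{e}_k}=-1=\varepsilon_{kk}$.
   Context: Write $\mathbf{i}=(i_1,\dots,i_n)\in\mathbb{Z}^n$ and $\mathbf{e}_k$ for the $k$-th standard unit vector. Fibonacci numbers are indexed $F_1=1,F_2=1,F_3=2,F_4=3,F_5=5,\dots$ with $F_{m+2}=F_{m+1}+F_m$. A signature matrix is a symmetric $n\times n$ matrix $\varepsilon=(\varepsilon_{k\ell})$ with $\varepsilon_{k\ell}\in\{1,-1\}$ for $k\ne\ell$ and $\varepsilon_{kk}=-1$. Given a signature matrix $\varepsilon$, an array $(a_{\mathbf{i}})_{\mathbf{i}\in\mathbb{Z}^n}$ with all $a_{\mathbf{i}}\in\mathbb{Z}_{>0}$ is an $\varepsilon$-$\mathrm{SL}_2$-tiling of $\mathbb{Z}^n$ if for all $\mathbf{i}\in\mathbb{Z}^n$ and all $k\ne\ell$: $a_{\mathbf{i}+\mathbf{e}_\ell}a_{\mathbf{i}+\mathbf{e}_k}-a_{\mathbf{i}}a_{\mathbf{i}+\mathbf{e}_k+\mathbf{e}_\ell}=\varepsilon_{k\ell}$.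 *)

From mathcomp Require Import all_boot all_order all_algebra.
Set Implicit Arguments. Unset Strict Implicit. Unset Printing Implicit Defensive.
Import Order.TTheory GRing.Theory Num.Theory.
Local Open Scope ring_scope.

Fixpoint fib (m : nat) : nat :=
  match m with
  | 0 => 0
  | 1 => 1
  | (p.+1 as q).+1 => fib q + fib p
  end%N.

Definition shift (n : nat) (i : 'I_n -> int) (k : 'I_n) : 'I_n -> int :=
  fun j => i j + (j == k)%:R.

Definition is_signature (n : nat) (eps : 'I_n -> 'I_n -> int) : Prop :=
  (forall k l, eps k l = eps l k) /\
  (forall k l, k != l -> eps k l = 1 \/ eps k l = -1) /\
  (forall k, eps k k = -1).

Definition is_SL2_tiling (n : nat) (eps : 'I_n -> 'I_n -> int)
  (a : ('I_n -> int) -> int) : Prop :=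
  (forall i, 0 < a i) /\
  (forall i k l, k != l ->
     a (shift i l) * a (shift i k) - a i * a (shift (shift i k) l) = eps k l).

(* Write x = a_i, y = a_(i+e_p), z = a_(i+e_q) for three distinct axes p, q, r.
   Eliminating the far corner of the unit cube from the tiling relations on
   its faces gives (y z - e_pq)(y e_qr - z e_pr) = x^2 (z e_qr - y e_pr), so
   y = z when e_pr = e_qr and y z = x^2 + e_pq otherwise.  If y = z everywhere,
   the tiling relation along the p-axis reads b_(t+1)^2 - b_t b_(t+2) = e_pq,
   and at the minimum of a positive integer sequence this forces e_pq = -1.
   Among any three axes one of these coincidences occurs, which propagates
   the relation with -1 to every axis.  At its minimum, a positive sequence
   with b_t b_(t+2) = b_(t+1)^2 + 1 has two consecutive 1s, and reading away
   from them it is 1, 2, 5, 13, ... = F_1, F_3, F_5, F_7, ... both ways. *)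

From mathcomp Require Import all_boot all_order all_algebra.
From mathcomp Require Import zify ring lra.
From Stdlib Require Import Classical FunctionalExtensionality.
Import Order.TTheory GRing.Theory Num.Theory.
Local Open Scope ring_scope.
Set Implicit Arguments. Unset Strict Implicit.

Definition oddfib (j : nat) : int := (fib j.*2.+1)%:Z.

Lemma oddfibSS j : oddfib j.+2 = 3 * oddfib j.+1 - oddfib j.
Proof.
have fibSS m : fib m.+2 = (fib m.+1 + fib m)%N by [].
rewrite /oddfib !doubleS !fibSS; lia.
Qed.

Lemma oddfib_ge1_nondecreasing j : 1 <= oddfib j <= oddfib j.+1.
Proof. by elim: j => [|j IH] //; rewrite oddfibSS; lia. Qed.

Lemma oddfib_neq0 j : oddfib j != 0.
Proof. by have := oddfib_ge1_nondecreasing j; lia. Qed.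

Lemma oddfib_cassini j : oddfib j * oddfib j.+2 = oddfib j.+1 ^+ 2 + 1.
Proof.
have invariant k : oddfib k ^+ 2 + oddfib k.+1 ^+ 2 + 1 = 3 * oddfib k * oddfib k.+1.
  by elim: k => [|k IH] //; rewrite oddfibSS; rewrite !expr2 in IH *; lia.
by have := invariant j; rewrite oddfibSS !expr2; lia.
Qed.

Definition cassini (b : int -> int) (e : int) :=
  forall t, b (t + 1) ^+ 2 - b t * b (t + 2) = e.

Lemma cassini_shift b e (s : int) : cassini b e -> cassini (fun t => b (s + t)) e.
Proof. by move=> rel t /=; have := rel (s + t); rewrite -!addrA. Qed.

Lemma cassini_reflect b e (s : int) : cassini b e -> cassini (fun t => b (s - t)) e.
Proof.
move=> rel t /=; have := rel (s - t - 2).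
have -> : s - t - 2 + 1 = s - (t + 1) by ring.
have -> : s - t - 2 + 2 = s - t by ring.
have -> : s - (t + 2) = s - t - 2 by ring.
by rewrite [_ * b (s - t)]mulrC.
Qed.

Lemma pos_seq_min (b : int -> int) : (forall t, 0 < b t) ->
  exists t0, forall t, b t0 <= b t.
Proof.
move=> pos.
suff below N : forall t, b t <= N%:Z -> exists t0, forall t, b t0 <= b t.
  by apply: (below (absz (b 0)) 0); rewrite abszE ler_norm.
elim: N => [|N IH] t btN; first by have := pos t; lia.
case: (classic (exists s, b s <= N%:Z)) => [[s bsN]|none]; first exact: IH bsN.
exists t => s; have : ~ b s <= N%:Z by move=> bsN; apply: none; exists s.
lia.
Qed.

Lemma gtz0_mul_eq1 (x y : int) : 0 < x -> x * y = 1 -> x = 1.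
Proof.
move=> x_gt0 xy1; have y_gt0 : 0 < y by rewrite -(pmulr_rgt0 _ x_gt0) xy1.
nia.
Qed.

Lemma cassiniN1_oddfib (b : int -> int) : cassini b (-1) -> b (-1) = 1 -> b 0 = 1 ->
  forall j : nat, b j%:Z = oddfib j.
Proof.
move=> rel bN1 b0.
suff pair j : b j%:Z = oddfib j /\ b (j.+1)%:Z = oddfib j.+1 by move=> j; case: (pair j).
elim: j => [|j [bj bj1]].
  split=> //; have := rel (-1); rewrite bN1 /=.
  have -> : -1 + 1 = 0 :> int by [].
  have -> : -1 + 2 = 1 :> int by [].
  rewrite b0 /oddfib /=; lia.
split=> //; apply: (mulfI (oddfib_neq0 j)).
rewrite oddfib_cassini -bj1 -bj; have := rel j.
have -> : j.+2%:Z = j%:Z + 2 by lia.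
have -> : j.+1%:Z = j%:Z + 1 by lia.
lra.
Qed.

Section PositiveCassiniSequence.

Variable b : int -> int.
Hypothesis b_gt0 : forall t, 0 < b t.

Lemma pos_seq_not_cassini1 : ~ cassini b 1.
Proof.
move=> rel; have [t0 min] := pos_seq_min b_gt0.
have := rel (t0 - 1); have := min (t0 - 1); have := min (t0 + 1); have := b_gt0 t0.
have -> : t0 - 1 + 2 = t0 + 1 by ring.
rewrite subrK expr2; nia.
Qed.

Lemma pos_seq_cassiniN1_unit_pair : cassini b (-1) -> exists t0, b t0 = 1 /\ b (t0 + 1) = 1.
Proof.
move=> rel; have [t0 min] := pos_seq_min b_gt0.
have := rel (t0 - 1); have := min (t0 - 1); have := min (t0 + 1); have := b_gt0 t0.
have -> : t0 - 1 + 2 = t0 + 1 by ring.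
rewrite subrK expr2 => x_gt0 le_y le_w cas.
have [eq_y|eq_w] : b (t0 + 1) = b t0 \/ b (t0 - 1) = b t0 by nia.
- have : b t0 * (b (t0 - 1) - b t0) = 1 by rewrite eq_y in cas; lia.
  move/(gtz0_mul_eq1 x_gt0) => x1.
  by exists t0; rewrite eq_y x1.
- have : b t0 * (b (t0 + 1) - b t0) = 1 by rewrite eq_w in cas; lia.
  move/(gtz0_mul_eq1 x_gt0) => x1.
  by exists (t0 - 1); rewrite subrK eq_w x1.
Qed.

Lemma pos_seq_cassiniN1_oddfib : cassini b (-1) -> forall t, exists j, b t = oddfib j.
Proof.
move=> rel t; have [t0 [bt0 bt1]] := pos_seq_cassiniN1_unit_pair rel.
have [le_t|lt_t] := lerP t t0.
- exists (absz (t0 - t)%R).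
  have := @cassiniN1_oddfib (fun s => b (t0 - s)) (cassini_reflect t0 rel).
  rewrite /= subr0 opprK bt1 bt0 => /(_ erefl erefl (absz (t0 - t)%R)).
  by have -> : t0 - (absz (t0 - t)%R)%:Z = t by lia.
- exists (absz (t - (t0 + 1))%R).
  have := @cassiniN1_oddfib (fun s => b (t0 + 1 + s)) (cassini_shift (t0 + 1) rel).
  rewrite /= addr0 addrK bt1 bt0 => /(_ erefl erefl (absz (t - (t0 + 1))%R)).
  by have -> : t0 + 1 + (absz (t - (t0 + 1))%R)%:Z = t by lia.
Qed.

End PositiveCassiniSequence.

(* Five of the six face relations of a unit cube with corner [x]; eliminating
   the opposite corner [T] leaves a relation among [x] and its neighbours
   [y], [z]. *)
Lemma cube_relations_identity (R : comRingType) (x y z w P Q S T e1 e2 e3 : R) :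
  z * y - x * P = e1 -> w * y - x * Q = e2 -> w * z - x * S = e3 ->
  Q * P - y * T = e3 -> S * P - z * T = e2 ->
  (y * z - e1) * (y * e3 - z * e2) = x ^+ 2 * (z * e3 - y * e2).
Proof. by move=> <- H2 H3 H4 H5; rewrite -{1}H3 -{1}H2 -H4 -H5; ring. Qed.

Section Translations.

Variable n : nat.
Implicit Types (i : 'I_n -> int) (k l : 'I_n) (s t : int).

Definition shift_by i k t : 'I_n -> int := fun j => i j + (j == k)%:R * t.

Lemma shiftE i k : shift i k = shift_by i k 1.
Proof. by apply: functional_extensionality => j; rewrite /shift /shift_by mulr1. Qed.

Lemma shift_by0 i k : shift_by i k 0 = i.
Proof. by apply: functional_extensionality => j; rewrite /shift_by mulr0 addr0. Qed.

Lemma shift_byD i k s t : shift_by (shift_by i k s) k t = shift_by i k (s + t).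
Proof. by apply: functional_extensionality => j; rewrite /shift_by; ring. Qed.

Lemma shift_byC i k l s t : shift_by (shift_by i k s) l t = shift_by (shift_by i l t) k s.
Proof. by apply: functional_extensionality => j; rewrite /shift_by; ring. Qed.

Lemma shiftC i k l : shift (shift i k) l = shift (shift i l) k.
Proof. by rewrite !shiftE shift_byC. Qed.

End Translations.

Definition line n (a : ('I_n -> int) -> int) i k : int -> int :=
  fun t => a (shift_by i k t).

Definition axis_cassini n (a : ('I_n -> int) -> int) (k : 'I_n) (e : int) :=
  forall i, a (shift i k) ^+ 2 - a i * a (shift (shift i k) k) = e.

Lemma axis_cassini_line n (a : ('I_n -> int) -> int) k e i :
  axis_cassini a k e -> cassini (line a i k) e.
Proof.
move=> rel t; have := rel (shift_by i k t).
by rewrite /line !shiftE !shift_byD -addrA.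
Qed.

Section Tiling.

Variables (n : nat) (eps : 'I_n -> 'I_n -> int) (a : ('I_n -> int) -> int).
Hypotheses (eps_sign : is_signature eps) (a_tiling : is_SL2_tiling eps a).

Lemma tiling_gt0 i : 0 < a i.
Proof. exact: a_tiling.1. Qed.

Lemma signature_offdiag k l : k != l -> eps k l = 1 \/ eps k l = -1.
Proof. exact: eps_sign.2.1. Qed.

Lemma tiling_no_axis_cassini1 k : ~ axis_cassini a k 1.
Proof.
move=> rel; apply: (@pos_seq_not_cassini1 (line a (fun=> 0) k)).
  by move=> t; apply: tiling_gt0.
exact: axis_cassini_line.
Qed.

Lemma tiling_cube_identity p q r i : p != q -> p != r -> q != r ->
  let x := a i in let y := a (shift i p) in let z := a (shift i q) in
  (y * z - eps p q) * (y * eps q r - z * eps p r) =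
    x ^+ 2 * (z * eps q r - y * eps p r).
Proof.
move=> pq pr qr x y z; have rel := a_tiling.2.
have rel_q_pr := rel (shift i q) p r pr; rewrite [shift (shift i q) p]shiftC in rel_q_pr.
exact: cube_relations_identity (rel i p q pq) (rel i p r pr) (rel i q r qr)
  (rel (shift i p) q r qr) rel_q_pr.
Qed.

Lemma tiling_twin_axes p q r : p != q -> p != r -> q != r -> eps p r = eps q r ->
  forall i, a (shift i p) = a (shift i q).
Proof.
move=> pq pr qr e_eq i; have := tiling_cube_identity i pq pr qr; rewrite /= e_eq.
have y_gt0 := tiling_gt0 (shift i p); have z_gt0 := tiling_gt0 (shift i q).
have x_gt0 := tiling_gt0 i.
set x := a i; set y := a (shift i p); set z := a (shift i q); set e := eps q r.
move=> cube.
have e_neq0 : e != 0 by rewrite /e; case: (signature_offdiag qr) => ->.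
have cofactor_gt0 : 0 < y * z - eps p q + x ^+ 2.
  by rewrite expr2; case: (signature_offdiag pq) => ->; nia.
have : (y - z) * ((y * z - eps p q + x ^+ 2) * e) = 0.
  transitivity ((y * z - eps p q) * (y * e - z * e) - x ^+ 2 * (z * e - y * e)).
    by ring.
  by rewrite cube subrr.
by move/eqP; rewrite !mulf_eq0 (negPf e_neq0) (gt_eqF cofactor_gt0) !orbF subr_eq0 => /eqP.
Qed.

Lemma tiling_axes_product p q r : p != q -> p != r -> q != r -> eps p r = - eps q r ->
  forall i, a (shift i p) * a (shift i q) = a i ^+ 2 + eps p q.
Proof.
move=> pq pr qr e_opp i; have := tiling_cube_identity i pq pr qr; rewrite /= e_opp.
have y_gt0 := tiling_gt0 (shift i p); have z_gt0 := tiling_gt0 (shift i q).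
set x := a i; set y := a (shift i p); set z := a (shift i q); set e := eps q r.
move=> cube.
have e_neq0 : e != 0 by rewrite /e; case: (signature_offdiag qr) => ->.
have : (y + z) * ((y * z - eps p q - x ^+ 2) * e) = 0.
  transitivity ((y * z - eps p q) * (y * e - z * - e) - x ^+ 2 * (z * e - y * - e)).
    by ring.
  by rewrite cube subrr.
move/eqP; rewrite !mulf_eq0 (negPf e_neq0) (gt_eqF (addr_gt0 y_gt0 z_gt0)) !orbF subr_eq0.
by move/eqP <-; ring.
Qed.

Lemma tiling_twin_axis_cassini p q : p != q ->
  (forall i, a (shift i p) = a (shift i q)) -> axis_cassini a p (-1) /\ eps p q = -1.
Proof.
move=> pq twin.
have cas : axis_cassini a p (eps p q).
  by move=> i; rewrite -(a_tiling.2 i p q pq) -(twin i) -(twin (shift i p)) expr2.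
case: (signature_offdiag pq) => e; last by rewrite -e.
by rewrite e in cas; have := tiling_no_axis_cassini1 cas.
Qed.

(* Then a_(i+e_k) = a_(i-e_l): the k-axis reads the l-axis backwards. *)
Lemma tiling_axis_cassini_transfer k l : axis_cassini a l (-1) ->
  (forall i, a (shift i k) * a (shift i l) = a i ^+ 2 + 1) -> axis_cassini a k (-1).
Proof.
move=> cas_l prod.
have back i : a (shift i k) = a (shift_by i l (-1)).
  apply: (mulIf (lt0r_neq0 (tiling_gt0 (shift i l)))); rewrite prod.
  have := cas_l (shift_by i l (-1)).
  rewrite !shiftE !shift_byD addNr shift_by0 -shiftE; lia.
move=> j; have -> : a (shift (shift j k) k) = a (shift_by j l (-2)).
  by rewrite back shiftE shift_byC -shiftE back shift_byD.
rewrite back; have := cas_l (shift_by j l (-2)); rewrite !shiftE !shift_byD.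
have -> : (-2 + 1 : int) = -1 by [].
have -> : (-1 + 1 : int) = 0 by [].
by rewrite shift_by0 mulrC.
Qed.

Lemma signature_opp_of_neq k l m : k != m -> l != m -> eps k m != eps l m ->
  eps k m = - eps l m.
Proof.
move=> km lm; case: (signature_offdiag km) (signature_offdiag lm) => -> [] ->//.
Qed.

Lemma tiling_axis_cassiniN1 k l m : k != l -> k != m -> l != m -> axis_cassini a k (-1).
Proof.
move=> kl km lm; have [sym _] := eps_sign.
have [e_klm|/(signature_opp_of_neq km lm) e_klm] := eqVneq (eps k m) (eps l m).
  exact: (tiling_twin_axis_cassini kl (tiling_twin_axes kl km lm e_klm)).1.
have ml : m != l by rewrite eq_sym.
have [e_kml|/(signature_opp_of_neq kl ml) e_kml] := eqVneq (eps k l) (eps m l).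
  exact: (tiling_twin_axis_cassini km (tiling_twin_axes km kl ml e_kml)).1.
have lk : l != k by rewrite eq_sym.
have e_lmk : eps l k = eps m k by rewrite sym e_kml -(sym k m) e_klm sym.
have mk : m != k by rewrite eq_sym.
have [cas_l e_lm] := tiling_twin_axis_cassini lm (tiling_twin_axes lm lk mk e_lmk).
apply: (tiling_axis_cassini_transfer cas_l) => i.
by rewrite (tiling_axes_product kl km lm e_klm) e_kml sym e_lm opprK.
Qed.

End Tiling.

Lemma exists_two_others n (k : 'I_n) : (3 <= n)%N ->
  exists l m : 'I_n, [/\ k != l, k != m & l != m].
Proof.
move=> n_ge3; have : (1 < #|predC1 k|)%N by rewrite cardC1 card_ord; case: n n_ge3 k.
case/card_gt1P=> l [m [kl km lm]]; exists l, m.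
by split; rewrite // eq_sym.
Qed.

Theorem mainTheorem8 (n : nat) (eps : 'I_n -> 'I_n -> int)
  (a : ('I_n -> int) -> int) :
  (3 <= n)%N -> is_signature eps -> is_SL2_tiling eps a ->
  (forall i, exists m : nat, (1 <= m)%N /\ a i = (fib (2 * m - 1))%:Z) /\
  (forall i k, a (shift i k) ^+ 2 - a i * a (shift (shift i k) k) = -1 /\
               eps k k = -1).
Proof.
move=> n_ge3 eps_sign a_tiling.
have cas k : axis_cassini a k (-1).
  have [l [m [kl km lm]]] := exists_two_others k n_ge3.
  exact (tiling_axis_cassiniN1 eps_sign a_tiling kl km lm).
split; last by move=> i k; split; [exact: cas | exact: eps_sign.2.2].
move=> i; pose k : 'I_n := Ordinal (leq_trans (isT : (1 <= 3)%N) n_ge3).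
have [j aij] := pos_seq_cassiniN1_oddfib (fun t => tiling_gt0 a_tiling _)
  (axis_cassini_line i (cas k)) 0.
exists j.+1; split=> //; move: aij; rewrite /line shift_by0 /oddfib => ->.
by rewrite -muln2; congr (fib _)%:Z; lia.
Qed.
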